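(* Let $P,Q\in\Gamma_n$ with $P\ne Q$, and $0<r\le R$ with $r\le p_i/q_i\le R$ for all $i$. Then $$r\le\frac{\chi^2(P\|Q)^{2/3}}{4\,h(P\|Q)^{2/3}}\le R.$$
   Context: $\Gamma_n=\{P=(p_1,\dots,p_n): p_i>0,\ \sum_i p_i=1\}$, $n\ge2$. $\chi^2(P\|Q)=\sum_i\frac{(p_i-q_i)^2}{q_i}$ and $h(P\|Q)=\frac12\sum_i(\sqrt{p_i}-\sqrt{q_i})^2$ (Hellinger discrimination). *)

From mathcomp Require Import all_boot all_order all_algebra.
From mathcomp Require Import all_classical all_reals all_analysis.
Set Implicit Arguments. Unset Strict Implicit. Unset Printing Implicit Defensive.
Import Order.TTheory GRing.Theory Num.Theory.
Local Open Scope ring_scope.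

Definition Gamma (R : realType) (n : nat) (P : 'I_n -> R) : Prop :=
  (forall i, 0 < P i) /\ \sum_(i < n) P i = 1.

Definition chi2 (R : realType) (n : nat) (P Q : 'I_n -> R) : R :=
  \sum_(i < n) (P i - Q i) ^+ 2 / Q i.

Definition hell (R : realType) (n : nat) (P Q : 'I_n -> R) : R :=
  2^-1 * \sum_(i < n) (Num.sqrt (P i) - Num.sqrt (Q i)) ^+ 2.

Set Warnings "-all".
From mathcomp Require Import all_boot all_order all_algebra.
From mathcomp Require Import all_classical all_reals all_analysis.
From mathcomp Require Import ring lra.
Set Implicit Arguments. Unset Strict Implicit. Unset Printing Implicit Defensive.
Import Order.TTheory GRing.Theory Num.Theory.
Local Open Scope ring_scope.

(** Writing [t_i = sqrt (p_i / q_i)], each summand of [chi2 P Q] factors as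
    [(t_i + 1)^2 (sqrt p_i - sqrt q_i)^2], so [chi2 P Q] lies between
    [(sqrt r + 1)^2 * 2 h] and [(sqrt R + 1)^2 * 2 h] with [h = hell P Q].
    Since [r <= 1 <= R], the elementary bounds [4 s^3 <= (s + 1)^2] for
    [s <= 1] and [(s + 1)^2 <= 4 s^3] for [s >= 1] turn this into
    [8 r^(3/2) h <= chi2 P Q <= 8 R^(3/2) h]; raising to the power [2/3]
    gives the claim. *)

Section ChiSquareTerm.
Variable R : rcfType.

Lemma chi2_termE (p q : R) : 0 < p -> 0 < q ->
  (p - q) ^+ 2 / q = (Num.sqrt (p / q) + 1) ^+ 2 * (Num.sqrt p - Num.sqrt q) ^+ 2.
Proof.
move=> p0 q0; rewrite sqrtrM ?ltW // sqrtrV ?ltW //.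
have y0 : Num.sqrt q != 0 by rewrite gt_eqF ?sqrtr_gt0.
rewrite -{1}(sqr_sqrtr (ltW p0)) -{1 2}(sqr_sqrtr (ltW q0)).
by field.
Qed.

Lemma ler_chi2_term (p q a b : R) : 0 < p -> 0 < q -> a <= p / q <= b ->
  (Num.sqrt a + 1) ^+ 2 * (Num.sqrt p - Num.sqrt q) ^+ 2 <= (p - q) ^+ 2 / q
  <= (Num.sqrt b + 1) ^+ 2 * (Num.sqrt p - Num.sqrt q) ^+ 2.
Proof.
move=> p0 q0 /andP[ha hb]; rewrite chi2_termE //.
have sqr_mono x y : x <= y -> (Num.sqrt x + 1) ^+ 2 <= (Num.sqrt y + 1) ^+ 2.
  move=> /ler_wsqrtr le_xy; rewrite ler_sqr ?nnegrE ?addr_ge0 ?sqrtr_ge0 //.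
  by rewrite lerD2r.
by apply/andP; split; apply: ler_wpM2r; rewrite ?sqr_ge0 ?sqr_mono.
Qed.

Lemma cube4_le_sqr_addr1 (s : R) : 0 <= s <= 1 -> 4 * s ^+ 3 <= (s + 1) ^+ 2.
Proof. by move=> /andP[s0 s1]; nra. Qed.

Lemma sqr_addr1_le_cube4 (s : R) : 1 <= s -> (s + 1) ^+ 2 <= 4 * s ^+ 3.
Proof. by move=> s1; nra. Qed.

End ChiSquareTerm.

Section ChiSquareHellinger.
Variable R : realType.

Lemma ratio_bounds_straddle1 (n : nat) (P Q : 'I_n -> R) (a b : R) :
  Gamma P -> Gamma Q -> (forall i, a <= P i / Q i <= b) -> a <= 1 <= b.
Proof.
move=> [_ P1] [Q0 Q1] hPQ.
apply/andP; split.
- rewrite -(mulr1 a) -{1}Q1 -P1 mulr_sumr; apply: ler_sum => i _.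
  by have /andP[+ _] := hPQ i; rewrite ler_pdivlMr // mulrC.
- rewrite -(mulr1 b) -{2}Q1 -P1 mulr_sumr; apply: ler_sum => i _.
  by have /andP[_ +] := hPQ i; rewrite ler_pdivrMr // mulrC.
Qed.

Lemma twice_hell (n : nat) (P Q : 'I_n -> R) :
  2 * hell P Q = \sum_(i < n) (Num.sqrt (P i) - Num.sqrt (Q i)) ^+ 2.
Proof. by rewrite /hell mulrA divff ?mul1r. Qed.

Lemma hell_gt0 (n : nat) (P Q : 'I_n -> R) :
  (forall i, 0 <= P i) -> (forall i, 0 <= Q i) -> P <> Q -> 0 < hell P Q.
Proof.
move=> P0 Q0 neqPQ; rewrite -(pmulr_rgt0 _ (ltr0n R 2)) twice_hell.
rewrite lt_def sumr_ge0 ?andbT => [|i _]; last exact: sqr_ge0.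
apply: contra_notN neqPQ => /eqP /psumr_eq0P eq0; apply: funext => i.
have /eqP := eq0 (fun _ _ => sqr_ge0 _) i isT.
by rewrite sqrf_eq0 subr_eq0 eqr_sqrt // => /eqP.
Qed.

Lemma chi2_hell_bounds (n : nat) (P Q : 'I_n -> R) (a b : R) :
  (forall i, 0 < P i) -> (forall i, 0 < Q i) -> (forall i, a <= P i / Q i <= b) ->
  (Num.sqrt a + 1) ^+ 2 * (2 * hell P Q) <= chi2 P Q
  <= (Num.sqrt b + 1) ^+ 2 * (2 * hell P Q).
Proof.
move=> P0 Q0 hPQ; rewrite twice_hell !mulr_sumr /chi2.
by apply/andP; split; apply: ler_sum => i _;
  have /andP[] := ler_chi2_term (P0 i) (Q0 i) (hPQ i).
Qed.

Lemma sqr_mul4_powR23 (s h : R) : 0 <= s -> 0 <= h ->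
  s ^+ 2 * (4 * h `^ (2 / 3)) = (4 * s ^+ 3 * (2 * h)) `^ (2 / 3).
Proof.
move=> s0 h0.
have -> : 4 * s ^+ 3 * (2 * h) = (2 * s) ^+ 3 * h by ring.
have cube23 : ((2 * s) ^+ 3) `^ (2 / 3) = (2 * s) ^+ 2.
  rewrite -powR_mulrn ?mulr_ge0 // -powRrM.
  have -> : (3%:R * (2 / 3) : R) = 2%:R by field.
  by rewrite powR_mulrn ?mulr_ge0.
by rewrite powRM ?exprn_ge0 ?mulr_ge0 // cube23; ring.
Qed.

End ChiSquareHellinger.

Theorem mainTheorem14 (R : realType) (n : nat) (P Q : 'I_n -> R) (r Rr : R) :
  (2 <= n)%N -> Gamma P -> Gamma Q -> P <> Q ->
  0 < r -> r <= Rr ->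
  (forall i, r <= P i / Q i <= Rr) ->
  r <= (chi2 P Q `^ (2 / 3)) / (4 * hell P Q `^ (2 / 3)) <= Rr.
Proof.
move=> _ GP GQ neqPQ r0 _ hPQ.
have /andP[r1 R1] := ratio_bounds_straddle1 GP GQ hPQ.
have [[P0 _] [Q0 _]] := (GP, GQ).
have h0 := hell_gt0 (fun i => ltW (P0 i)) (fun i => ltW (Q0 i)) neqPQ.
have /andP[chiL chiU] := chi2_hell_bounds P0 Q0 hPQ.
have hh0 : 0 <= 2 * hell P Q by rewrite mulr_ge0 // ltW.
have chi0 : 0 <= chi2 P Q by apply: le_trans chiL; rewrite mulr_ge0 ?sqr_ge0.
have s1 : Num.sqrt r <= 1 by rewrite -sqrtr1 ler_wsqrtr.
have S1 : 1 <= Num.sqrt Rr by rewrite -sqrtr1 ler_wsqrtr.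
rewrite -(sqr_sqrtr (ltW r0)) -(sqr_sqrtr (le_trans ler01 R1)).
rewrite ler_pdivlMr ?ler_pdivrMr ?mulr_gt0 ?powR_gt0 //.
rewrite !sqr_mul4_powR23 ?sqrtr_ge0 ?(ltW h0) //.
have bound0 s : 0 <= s -> 4 * s ^+ 3 * (2 * hell P Q) \is Num.nneg.
  by move=> s0; rewrite nnegrE mulr_ge0 // mulr_ge0 // exprn_ge0.
apply/andP; split; apply: ge0_ler_powR;
  rewrite ?bound0 ?sqrtr_ge0 ?nnegrE //.
- apply: le_trans chiL; rewrite ler_wpM2r //.
  by rewrite cube4_le_sqr_addr1 ?sqrtr_ge0.
- apply: le_trans chiU _; rewrite ler_wpM2r //.
  exact: sqr_addr1_le_cube4.
Qed.
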